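(* Let $(X,\{R_i\}_{i=0}^d)$ be a symmetric association scheme with adjacency matrices $A_0=I,\dots,A_d$ and intersection numbers $p_{ij}^k$, and let $W=\sum_{i=0}^dw_iA_i$ with $w_0=1$ be a complex Hadamard matrix. Let $\Delta\subseteq\{1,\dots,d\}$, and suppose there exists $i\in\{1,\dots,d\}$ such that $p_{i_1,j_1}^i>0$ for all $i_1,j_1\in\Delta$. Then \[ H_4(W)\supseteq\left\{\frac{w_{i_1}w_{i_2}}{w_{j_1}w_{j_2}}\;\middle|\;i_1,i_2,j_1,j_2\in\Delta\right\}\setminus\{1\}. \] In particular, if there exists $i\in\{1,\dots,d\}$ such that $p_{i_1,j_1}^i>0$ for all $i_1,j_1\in\{1,\dots,d\}$, then \[ H_4(W)\setminus\{1\}=\left\{\frac{w_{i_1}w_{i_2}}{w_{j_1}w_{j_2}}\;\middle|\;i_1,i_2,j_1,j_2\in\{1,\dots,d\}\right\}\setminus\{1\}. \]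
   Context: An association scheme $(X,\{R_i\}_{i=0}^d)$ is a partition of $X\times X$ into relations $R_0=\{(x,x)\}$, $R_1,\dots,R_d$ such that for $(x,y)\in R_k$ the number $p_{ij}^k=|\{z\in X:(x,z)\in R_i,(z,y)\in R_j\}|$ depends only on $i,j,k$; symmetric means each $R_i$ is symmetric. $A_i$ is the $(0,1)$-matrix of $R_i$. A complex Hadamard matrix is a square complex matrix $H$ of order $n=|X|$ with entries of absolute value $1$ and $HH^*=nI$. For $W$ indexed by $X$, \[ H_4(W)=\left\{\frac{W_{x_1,y_1}W_{x_2,y_2}}{W_{x_2,y_1}W_{x_1,y_2}}\;\middle|\;x_1,x_2,y_1,y_2\in X,\ |\{x_1,x_2,y_1,y_2\}|=4\right\}. \] *)

From HB Require Import structures.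
From mathcomp Require Import all_boot all_order all_algebra all_field.
Set Implicit Arguments. Unset Strict Implicit. Unset Printing Implicit Defensive.
Import Order.TTheory GRing.Theory Num.Theory.
Local Open Scope ring_scope.

(* An association scheme with classes R_0..R_d on a finite set X is encoded
   by the function R : X -> X -> 'I_d.+1 giving the index of the unique
   relation containing (x,y) (so the R_i partition X x X). *)
Record assoc_scheme (X : finType) (d : nat) (R : X -> X -> 'I_d.+1) : Prop := {
  as_diag : forall x y, (R x y == ord0) = (x == y);
  as_nonempty : forall i : 'I_d.+1, exists x y, R x y = i;
  as_regular : forall (i j k : 'I_d.+1) (x y x' y' : X),
      R x y = k -> R x' y' = k ->
      #|[set z | (R x z == i) && (R z y == j)]|
      = #|[set z | (R x' z == i) && (R z y' == j)]| }.

Definition symmetric_scheme (X : finType) (d : nat) (R : X -> X -> 'I_d.+1) : Prop :=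
  forall x y, R x y = R y x.

Definition pnum (X : finType) (d : nat) (R : X -> X -> 'I_d.+1) (i j k : 'I_d.+1) : nat :=
  match [pick xy : X * X | R xy.1 xy.2 == k] with
  | Some xy => #|[set z | (R xy.1 z == i) && (R z xy.2 == j)]|
  | None => 0
  end.

Definition complex_hadamard (X : finType) (C : numClosedFieldType) (W : X -> X -> C) : Prop :=
  (forall x y, `|W x y| = 1) /\
  (forall x y, \sum_(z : X) W x z * (W y z)^* = (x == y)%:R * #|X|%:R).

Definition H4 (X : finType) (C : numClosedFieldType) (W : X -> X -> C) (c : C) : Prop :=
  exists x1 x2 y1 y2 : X,
    [/\ uniq [:: x1; x2; y1; y2] &
        c = W x1 y1 * W x2 y2 / (W x2 y1 * W x1 y2)].

From HB Require Import structures.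
From mathcomp Require Import all_boot all_order all_algebra all_field.
Import Order.TTheory GRing.Theory Num.Theory.
Local Open Scope ring_scope.

(* Pick (x, y) in the relation R_i.  Positivity of p_{i1 j1}^i and p_{j2 i2}^i
   gives y1, y2 with R(x,y1) = i1, R(y1,y) = j1, R(x,y2) = j2, R(y2,y) = i2;
   by symmetry the 2x2 minor ratio of W on rows x, y and columns y1, y2 is
   w_i1 w_i2 / (w_j1 w_j2).  All four points are distinct because the indices
   are nonzero, except possibly y1 = y2, which forces the ratio to be 1.
   Conversely every element of H_4(W) is such a ratio of off-diagonal weights. *)

Section Scheme.

Context {X : finType} {d : nat} {R : X -> X -> 'I_d.+1}.
Hypothesis scheme : assoc_scheme R.

Lemma pnum_gt0_witness (a b k : 'I_d.+1) :
  (0 < pnum R a b k)%N -> forall x y, R x y = k -> exists z, R x z = a /\ R z y = b.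
Proof.
rewrite /pnum; case: pickP => [[u v] /= /eqP Ruv|] // p_gt0 x y Rxy.
rewrite (as_regular scheme a b Ruv Rxy) in p_gt0.
by case/card_gt0P: p_gt0 => z; rewrite inE => /andP[/eqP ? /eqP ?]; exists z.
Qed.

Lemma scheme_neq0 x y : (R x y != ord0) = (x != y).
Proof. by rewrite (as_diag scheme). Qed.

Context {C : numClosedFieldType} {w : 'I_d.+1 -> C}.
Let W x y := w (R x y).

Lemma H4_ratio_offdiag c : H4 W c ->
  exists i1 i2 j1 j2 : 'I_d.+1,
    [/\ i1 != ord0, i2 != ord0, j1 != ord0, j2 != ord0 &
        c = w i1 * w i2 / (w j1 * w j2)].
Proof.
case=> [x1 [x2 [y1 [y2 []]]]] /=; rewrite !inE !negb_or.
case/and4P => /and3P[_ ne11 ne12] /andP[ne21 ne22] _ _ ->.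
by exists (R x1 y1), (R x2 y2), (R x2 y1), (R x1 y2); rewrite !scheme_neq0.
Qed.

Hypothesis symmetric : symmetric_scheme R.
Hypothesis hadamard : complex_hadamard W.

Lemma hadamard_weight_neq0 x y : w (R x y) != 0.
Proof. by rewrite -normr_eq0 hadamard.1 oner_neq0. Qed.

Lemma H4_ratio_of_pnum (i i1 i2 j1 j2 : 'I_d.+1) :
  [/\ i != ord0, i1 != ord0, i2 != ord0, j1 != ord0 & j2 != ord0] ->
  (0 < pnum R i1 j1 i)%N -> (0 < pnum R j2 i2 i)%N ->
  w i1 * w i2 / (w j1 * w j2) != 1 ->
  H4 W (w i1 * w i2 / (w j1 * w j2)).
Proof.
case=> i_nz i1_nz i2_nz j1_nz j2_nz p1 p2 ratio_neq1.
have [x [y Rxy]] := as_nonempty scheme i.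
have [y1 [Rxy1 Ry1y]] := pnum_gt0_witness _ _ _ p1 _ _ Rxy.
have [y2 [Rxy2 Ry2y]] := pnum_gt0_witness _ _ _ p2 _ _ Rxy.
have Ryy1 : R y y1 = j1 by rewrite symmetric.
have Ryy2 : R y y2 = i2 by rewrite symmetric.
exists x, y, y1, y2; split; last by rewrite /W Rxy1 Ryy2 Ryy1 Rxy2.
have y1_neq_y2 : y1 != y2.
  apply: contra ratio_neq1 => /eqP y12; subst y2.
  have -> : j2 = i1 by rewrite -Rxy2 Rxy1.
  have -> : i2 = j1 by rewrite -Ryy2 Ryy1.
  rewrite [w j1 * _]mulrC divff // mulf_neq0 //.
    by rewrite -Rxy1 hadamard_weight_neq0.
  by rewrite -Ryy1 hadamard_weight_neq0.
rewrite /= !inE !negb_or y1_neq_y2 -!scheme_neq0 Rxy Rxy1 Rxy2 Ryy1 Ryy2.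
by rewrite i_nz i1_nz j1_nz j2_nz i2_nz.
Qed.

End Scheme.

Theorem lemma5p2 (X : finType) (d : nat) (R : X -> X -> 'I_d.+1)
    (C : numClosedFieldType) (w : 'I_d.+1 -> C) :
  assoc_scheme R -> symmetric_scheme R ->
  w ord0 = 1 -> complex_hadamard (fun x y => w (R x y)) ->
  (forall Delta : {set 'I_d.+1}, ord0 \notin Delta ->
     (exists i : 'I_d.+1, i != ord0 /\
        forall i1 j1, i1 \in Delta -> j1 \in Delta -> (0 < pnum R i1 j1 i)%N) ->
     forall i1 i2 j1 j2, i1 \in Delta -> i2 \in Delta -> j1 \in Delta -> j2 \in Delta ->
       w i1 * w i2 / (w j1 * w j2) != 1 ->
       H4 (fun x y => w (R x y)) (w i1 * w i2 / (w j1 * w j2)))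
  /\
  ((exists i : 'I_d.+1, i != ord0 /\
      forall i1 j1 : 'I_d.+1, i1 != ord0 -> j1 != ord0 -> (0 < pnum R i1 j1 i)%N) ->
   forall c : C,
     (H4 (fun x y => w (R x y)) c /\ c != 1) <->
     ((exists i1 i2 j1 j2 : 'I_d.+1,
         [/\ i1 != ord0, i2 != ord0, j1 != ord0, j2 != ord0 &
             c = w i1 * w i2 / (w j1 * w j2)]) /\ c != 1)).
Proof.
move=> scheme sym _ hadamard; split.
  move=> D D0 [i [i_nz pD]] i1 i2 j1 j2 i1D i2D j1D j2D.
  have nzD k : k \in D -> k != ord0 by apply: contraTneq => ->.
  apply: (H4_ratio_of_pnum scheme sym hadamard i); rewrite ?pD //.
  by split; rewrite // nzD.
move=> [i [i_nz p_gt0]] c; split=> [[/(H4_ratio_offdiag scheme) ? ?] // |].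
case=> [[i1 [i2 [j1 [j2 [? ? ? ? ->]]]]] ratio_neq1]; split=> //.
by apply: (H4_ratio_of_pnum scheme sym hadamard i); rewrite ?p_gt0.
Qed.
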